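(* Let $k\ge2$ and let $\mathcal X=\{x_1,\dots,x_{k+1}\}\subset\mathbb R^d$ be in general position with $c(\mathcal X)\in\sigma(\mathcal X)$. Suppose the facet $\hat{\mathcal X}_{\min}$ of $\mathcal X$ whose affine hull is closest to $c(\mathcal X)$ is unique. Then $c(\hat{\mathcal X}_{\min})\in\sigma(\hat{\mathcal X}_{\min})$.
   Context: For a set $\mathcal Y$ of $m+1$ affinely independent points in $\mathbb R^d$, $c(\mathcal Y)$ is the point equidistant from all points of $\mathcal Y$ that minimizes this common distance (equivalently, the circumcenter of $\mathcal Y$ within its affine hull), and $\sigma(\mathcal Y)$ is the open geometric $m$-simplex spanned by $\mathcal Y$ (its relative interior). The facets of $\mathcal X$ are the sets $\mathcal X\setminus\{x_i\}$; $\hat{\mathcal X}_{\min}$ is the facet minimizing the Euclidean distance from $c(\mathcal X)$ to its affine hull. *)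

(* Points of R^d are row vectors 'rV[R]_d over a real closed field R
   (the statement is first-order algebraic, so rcfType covers the reals). *)
From HB Require Import structures.
From mathcomp Require Import all_boot all_order all_algebra.
Set Implicit Arguments. Unset Strict Implicit. Unset Printing Implicit Defensive.
Import Order.TTheory GRing.Theory Num.Theory.
Local Open Scope ring_scope.

Section Simplex.
Variables (R : rcfType) (d : nat).

Definition enorm (v : 'rV[R]_d) : R := Num.sqrt (\sum_(j < d) (v 0 j) ^+ 2).
Definition edist (x y : 'rV[R]_d) : R := enorm (x - y).

Definition aff_indep (n : nat) (Y : 'I_n -> 'rV[R]_d) : Prop :=
  forall l : 'I_n -> R,
    \sum_(i < n) l i = 0 -> \sum_(i < n) l i *: Y i = 0 -> forall i, l i = 0.

Definition in_aff (n : nat) (Y : 'I_n -> 'rV[R]_d) (p : 'rV[R]_d) : Prop :=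
  exists l : 'I_n -> R, \sum_(i < n) l i = 1 /\ p = \sum_(i < n) l i *: Y i.

Definition in_open_simplex (n : nat) (Y : 'I_n -> 'rV[R]_d) (p : 'rV[R]_d) : Prop :=
  exists l : 'I_n -> R, (forall i, 0 < l i) /\ \sum_(i < n) l i = 1 /\
    p = \sum_(i < n) l i *: Y i.

Definition is_circumcenter (n : nat) (Y : 'I_n -> 'rV[R]_d) (c : 'rV[R]_d) : Prop :=
  in_aff Y c /\ forall i j, edist c (Y i) = edist c (Y j).

Definition is_dist_aff (n : nat) (Y : 'I_n -> 'rV[R]_d) (c : 'rV[R]_d) (r : R) : Prop :=
  (exists p, in_aff Y p /\ edist c p = r) /\
  (forall q, in_aff Y q -> r <= edist c q).

Definition facet (k : nat) (X : 'I_k.+1 -> 'rV[R]_d) (i : 'I_k.+1) : 'I_k -> 'rV[R]_d :=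
  fun j => X (lift i j).

End Simplex.

From HB Require Import structures.
From mathcomp Require Import all_boot all_order all_algebra.
From mathcomp Require Import ring lra.
Import Order.TTheory GRing.Theory Num.Theory.
Local Open Scope ring_scope.

(* Let c be the circumcenter of X, lying in the open simplex sigma(X), let c0
   be the circumcenter of the facet F = X \ {x_i0} nearest to c, and suppose
   some barycentric coordinate of c0 with respect to F, say the one of x_j,
   is <= 0.  The proof has three ingredients.
   1. Both c and c0 are equidistant from the vertices of F, so w = c - c0 is
      orthogonal to aff(F) and c0 is the foot of the perpendicular from c onto
      aff(F); hence |c - c0| <= D i0 (Pythagoras).
   2. Along the segment from c (all coordinates > 0) to c0 (coordinate of x_j
      <= 0, and coordinate of x_i0 = 0), the x_j-coordinate vanishes at some
      point q, which therefore lies in aff(X \ {x_j}); thus D j <= |c - q|.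
   3. q lies on the segment, so |c - q| <= |c - c0|.
   Chaining gives D j <= D i0, contradicting the uniqueness of the minimum. *)

Set Implicit Arguments. Unset Strict Implicit.

Section Euclid.
Variables (R : rcfType) (d : nat).
Implicit Types (a b c p u v w x y : 'rV[R]_d).

Definition sqnorm v : R := \sum_(j < d) (v 0 j) ^+ 2.
Definition dot u v : R := \sum_(j < d) u 0 j * v 0 j.

Lemma sqnorm_ge0 v : 0 <= sqnorm v.
Proof. by apply: sumr_ge0 => j _; rewrite sqr_ge0. Qed.

Lemma sqnormZ t v : sqnorm (t *: v) = t ^+ 2 * sqnorm v.
Proof. by rewrite /sqnorm mulr_sumr; apply: eq_bigr => j _; rewrite !mxE; ring. Qed.

Lemma edist_le a b x y :
  (edist a x <= edist b y) = (sqnorm (a - x) <= sqnorm (b - y)).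
Proof. by rewrite /edist /enorm ler_sqrt ?sqnorm_ge0. Qed.

Lemma edist_eq a b x y :
  edist a x = edist b y -> sqnorm (a - x) = sqnorm (b - y).
Proof.
by rewrite /edist /enorm => /eqP; rewrite eqr_sqrt ?sqnorm_ge0 // => /eqP.
Qed.

Lemma dotB u v w : dot u (v - w) = dot u v - dot u w.
Proof. by rewrite /dot -sumrB; apply: eq_bigr => j _; rewrite !mxE; ring. Qed.

Lemma dot_comb u n (l : 'I_n -> R) (Y : 'I_n -> 'rV[R]_d) :
  dot u (\sum_(i < n) l i *: Y i) = \sum_(i < n) l i * dot u (Y i).
Proof.
rewrite /dot; under eq_bigr => j _ do rewrite summxE big_distrr.
rewrite exchange_big; apply: eq_bigr => i _; rewrite mulr_sumr.
by apply: eq_bigr => j _; rewrite mxE /= mulrCA.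
Qed.

Lemma sqnorm_subB c (c0 : 'rV[R]_d) x :
  sqnorm (c - x) - sqnorm (c0 - x) = sqnorm c - sqnorm c0 - 2 * dot (c - c0) x.
Proof.
rewrite /sqnorm /dot mulr_sumr -!sumrB; apply: eq_bigr => j _; rewrite !mxE; ring.
Qed.

Lemma sqnorm_split c (c0 : 'rV[R]_d) p :
  sqnorm (c - p) = sqnorm (c - c0) + 2 * dot (c - c0) (c0 - p) + sqnorm (c0 - p).
Proof.
rewrite /sqnorm /dot mulr_sumr -!big_split; apply: eq_bigr => j _ /=; rewrite !mxE.
ring.
Qed.

Lemma edist_segment c (c0 : 'rV[R]_d) t :
  0 <= t <= 1 -> edist c ((1 - t) *: c + t *: c0) <= edist c c0.
Proof.
move=> /andP[t_ge0 t_le1]; rewrite edist_le.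
have -> : c - ((1 - t) *: c + t *: c0) = t *: (c - c0).
  by apply/rowP => m; rewrite !mxE; ring.
rewrite sqnormZ ler_piMl ?sqnorm_ge0 // expr2; nra.
Qed.

End Euclid.

Section Foot.
Variables (R : rcfType) (d n : nat) (Y : 'I_n -> 'rV[R]_d).

Lemma equidistant_orthogonal c c0 :
  (forall i j, edist c (Y i) = edist c (Y j)) ->
  (forall i j, edist c0 (Y i) = edist c0 (Y j)) ->
  forall i j, dot (c - c0) (Y i) = dot (c - c0) (Y j).
Proof.
move=> c_eq c0_eq i j; apply/eqP.
have := sqnorm_subB c c0 (Y i).
rewrite (edist_eq (c_eq i j)) (edist_eq (c0_eq i j)) sqnorm_subB => /eqP.
by rewrite (inj_eq (addrI _)) eqr_opp (inj_eq (mulfI _)) ?pnatr_eq0 // eq_sym.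
Qed.

Lemma orthogonal_aff w :
  (forall i j, dot w (Y i) = dot w (Y j)) ->
  forall p q, in_aff Y p -> in_aff Y q -> dot w p = dot w q.
Proof.
move=> w_eq p q [l [lsum ->]] [m [msum ->]]; rewrite !dot_comb.
case: n Y l m w_eq lsum msum => [|n'] Y' l m w_eq lsum msum.
  by move: lsum; rewrite big_ord0 => /eqP; rewrite eq_sym oner_eq0.
under eq_bigr do rewrite (w_eq _ ord0).
under [RHS]eq_bigr do rewrite (w_eq _ ord0).
by rewrite -!mulr_suml lsum msum.
Qed.

Lemma foot_nearest c c0 :
  in_aff Y c0 -> (forall i j, dot (c - c0) (Y i) = dot (c - c0) (Y j)) ->
  forall p, in_aff Y p -> edist c c0 <= edist c p.
Proof.
move=> c0_in w_eq p p_in; rewrite edist_le (sqnorm_split c c0 p) dotB.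
rewrite (orthogonal_aff w_eq c0_in p_in) subrr mulr0 addr0.
by rewrite lerDl sqnorm_ge0.
Qed.

Lemma circumcenter_dist_aff c c0 r :
  (forall i j, edist c (Y i) = edist c (Y j)) ->
  is_circumcenter Y c0 -> is_dist_aff Y c r -> edist c c0 <= r.
Proof.
move=> c_eq [c0_in c0_eq] [[p [p_in <-]] _].
exact: foot_nearest c0_in (equidistant_orthogonal c_eq c0_eq) p p_in.
Qed.

End Foot.

Section Barycentric.
Variables (R : rcfType) (d k : nat) (X : 'I_k.+1 -> 'rV[R]_d).

Lemma in_aff_facet (rho : 'I_k.+1 -> R) j :
  rho j = 0 -> \sum_i rho i = 1 -> in_aff (facet X j) (\sum_i rho i *: X i).
Proof.
move=> rho_j rho_sum; exists (fun m => rho (lift j m)); rewrite /facet.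
move: rho_sum; rewrite !(bigD1_ord j) //= rho_j add0r scale0r add0r.
by split.
Qed.

Definition extend_coords i0 (mu : 'I_k -> R) (i : 'I_k.+1) : R :=
  if unlift i0 i is Some a then mu a else 0.

Lemma extend_coords_lift i0 mu a : extend_coords i0 mu (lift i0 a) = mu a.
Proof. by rewrite /extend_coords liftK. Qed.

Lemma extend_coords_sum i0 mu :
  \sum_i extend_coords i0 mu i = \sum_a mu a.
Proof.
rewrite (bigD1_ord i0) //= {1}/extend_coords unlift_none add0r.
by under eq_bigr do rewrite extend_coords_lift.
Qed.

Lemma extend_coords_comb i0 mu :
  \sum_i extend_coords i0 mu i *: X i = \sum_a mu a *: facet X i0 a.
Proof.
rewrite (bigD1_ord i0) //= {1}/extend_coords unlift_none scale0r add0r.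
by under eq_bigr do rewrite extend_coords_lift.
Qed.

Lemma segment_meets_facet c c0 (lam mu : 'I_k.+1 -> R) j :
  (forall i, 0 < lam i) -> \sum_i lam i = 1 -> c = \sum_i lam i *: X i ->
  \sum_i mu i = 1 -> c0 = \sum_i mu i *: X i -> mu j <= 0 ->
  exists2 t, 0 <= t <= 1 & in_aff (facet X j) ((1 - t) *: c + t *: c0).
Proof.
move=> lam_pos lam_sum -> mu_sum -> mu_j.
have gap : 0 < lam j - mu j by have := lam_pos j; lra.
pose t := lam j / (lam j - mu j).
have t01 : 0 <= t <= 1.
  apply/andP; split; first by rewrite divr_ge0 ?ltW.
  by rewrite ler_pdivrMr // mul1r; lra.
exists t => //.
pose rho i := (1 - t) * lam i + t * mu i.
have -> : (1 - t) *: \sum_i lam i *: X i + t *: \sum_i mu i *: X i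
        = \sum_i rho i *: X i.
  rewrite !scaler_sumr -big_split /=; apply: eq_bigr => i _.
  by rewrite /rho !scalerA -scalerDl.
apply: in_aff_facet.
  by rewrite /rho /t; field; rewrite gt_eqF.
by rewrite big_split /= -!mulr_sumr lam_sum mu_sum; ring.
Qed.

End Barycentric.

Theorem mainTheorem17 (R : rcfType) (d k : nat) (X : 'I_k.+1 -> 'rV[R]_d) :
  (2 <= k)%N ->
  aff_indep X ->
  forall c : 'rV[R]_d, is_circumcenter X c -> in_open_simplex X c ->
  forall D : 'I_k.+1 -> R, (forall i, is_dist_aff (facet X i) c (D i)) ->
  forall i0 : 'I_k.+1, (forall i, i != i0 -> D i0 < D i) ->
  forall c0 : 'rV[R]_d, is_circumcenter (facet X i0) c0 ->
  in_open_simplex (facet X i0) c0.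
Proof.
move=> _ _ c [_ c_eq] [lam [lam_pos [lam_sum lam_c]]] D D_dist i0 D_min c0 c0_circ.
have [[mu [mu_sum mu_c0]] _] := c0_circ.
have [/forallP mu_pos | /forallPn [j]] := boolP [forall a, 0 < mu a].
  by exists mu.
rewrite -leNgt => mu_j; exfalso.
set j' := lift i0 j.
have c0_near : edist c c0 <= D i0.
  apply: circumcenter_dist_aff c0_circ (D_dist i0).
  by move=> a b; apply: c_eq.
(* ingredient 2: the segment [c, c0] meets aff(X \ {x_j'}) at q *)
have mu_j' : extend_coords i0 mu j' <= 0 by rewrite extend_coords_lift.
have [t t01 q_in] := segment_meets_facet lam_pos lam_sum lam_c
  (etrans (extend_coords_sum _ _) mu_sum)
  (etrans mu_c0 (esym (extend_coords_comb X _ _))) mu_j'.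
have Dj_le := (D_dist j').2 _ q_in.
have q_near := edist_segment c c0 t01.
have := D_min j'; rewrite eq_sym neq_lift => /(_ isT).
by rewrite ltNge (le_trans Dj_le (le_trans q_near c0_near)).
Qed.
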